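(* Let $U_0>0$, $\omega_f\in\mathbb{R}$ and $h$ the Heaviside function. Consider $v_x'(x,y,z,t) = h(t)\int_0^t \sin[x+y+z-U_0(t-\tau)]\sin\omega_f\tau\,d\tau$, $v_y' = 0$, $v_z'(x,y,z,t) = -h(t)\int_0^t\sin[x+y+z-U_0(t-\tau)]\sin\omega_f\tau\,d\tau$, $p'=0$ (the pointwise solution of the forced linearized Euler system given by Duhamel's formula with $f_1=f_2=f_3=0$, $f_4(\xi)=\sin\xi$, $k_4=l_4=m_4=1$). Then there is no function $\Phi(x,y,z,t)$ with $v_x' = \partial\Phi/\partial x$, $v_y' = \partial\Phi/\partial y$, $v_z' = \partial\Phi/\partial z$, i.e. no velocity potential exists for this solution.
   Context: The forced linearized Euler system is $\partial_t v_x' + U_0\partial_x v_x' + \frac1{\rho_0}\partial_x p' = h(t)F\sin\omega_f t$, $\partial_t v_y' + U_0\partial_x v_y' + \frac1{\rho_0}\partial_y p' = h(t)G\sin\omega_f t$, $\partial_t v_z' + U_0\partial_x v_z' + \frac1{\rho_0}\partial_z p' = h(t)H\sin\omega_f t$, $\partial_t p' + U_0\partial_xp' + \rho_0c_0^2(\partial_xv_x'+\partial_yv_y'+\partial_zv_z') = h(t)P\sin\omega_f t$; here $F = \sin(x+y+z)$, $G=0$, $H=-\sin(x+y+z)$, $P=0$. *)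

From Stdlib Require Import Reals.
From Coquelicot Require Import Coquelicot.
Open Scope R_scope.

(* Heaviside function (value at 0 is immaterial here: the integral over [0,0] is 0). *)
Definition heaviside (t : R) : R := if Rle_dec 0 t then 1 else 0.

Definition duhamel_int (U0 omega_f x y z t : R) : R :=
  RInt (fun tau => sin (x + y + z - U0 * (t - tau)) * sin (omega_f * tau)) 0 t.

Definition vx' (U0 omega_f x y z t : R) : R :=
  heaviside t * duhamel_int U0 omega_f x y z t.
Definition vy' (U0 omega_f x y z t : R) : R := 0.
Definition vz' (U0 omega_f x y z t : R) : R :=
  - (heaviside t * duhamel_int U0 omega_f x y z t).
Definition p' (U0 omega_f x y z t : R) : R := 0.

(** A velocity potential [Phi] with [vy' = 0] does not depend on [y], so neither
    does [vx' = d Phi / dx].  But the integrand of [vx'] is [sin (x + y + z - ...)],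
    which changes sign when [y] is shifted by [PI]; hence [vx'] would vanish
    identically.  It does not: at [x + y + z = PI/2] and small [t > 0] it is the
    integral of [cos (U0 (t - tau)) sin (omega_f tau)], whose integrand has the
    sign of [omega_f] on [(0, t)]. *)

From Stdlib Require Import Reals Lra.
From Coquelicot Require Import Coquelicot.
Open Scope R_scope.

Lemma is_derive_0_const (f : R -> R) :
  (forall x, is_derive f x 0) -> forall a b, f a = f b.
Proof.
  intros df a b.
  destruct (MVT_gen f a b (fun _ => 0)) as [c [_ Hc]].
  - intros x _; apply df.
  - intros x _; apply continuity_pt_filterlim.
    apply (ex_derive_continuous (V := R_NormedModule)).
    exists 0; apply df.
  - lra.
Qed.

Lemma partial_derive_indep (F f : R -> R -> R) :
  (forall a b, is_derive (fun a' => F a' b) a (f a b)) ->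
  (forall a b, is_derive (F a) b 0) ->
  forall a b b', f a b = f a b'.
Proof.
  intros dF1 dF2 a b b'.
  rewrite <- (is_derive_unique _ _ _ (dF1 a b')).
  symmetry; apply is_derive_unique.
  apply (is_derive_ext (fun a' => F a' b)); [|apply dF1].
  intro a'; apply (is_derive_0_const (F a')), dF2.
Qed.

Lemma continuous_sin_conv (g : R -> R) (U0 w t : R) :
  (forall u, ex_derive g u) ->
  forall tau, continuous (fun tau => g (U0 * (t - tau)) * sin (w * tau)) tau.
Proof.
  intros dg tau.
  apply (ex_derive_continuous (V := R_NormedModule)).
  apply ex_derive_mult.
  - apply (ex_derive_comp g (fun tau => U0 * (t - tau))); [apply dg | auto_derive; auto].
  - auto_derive; auto.
Qed.

Lemma RInt_sin_conv_opp (g : R -> R) (U0 w t : R) :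
  (forall u, ex_derive g u) ->
  RInt (fun tau => - (g (U0 * (t - tau)) * sin (w * tau))) 0 t
  = - RInt (fun tau => g (U0 * (t - tau)) * sin (w * tau)) 0 t.
Proof.
  intro dg.
  apply (RInt_opp (V := R_CompleteNormedModule)).
  apply ex_RInt_continuous; intros; apply continuous_sin_conv, dg.
Qed.

Lemma duhamel_int_shift_PI (U0 w x y z t : R) :
  duhamel_int U0 w x (y + PI) z t = - duhamel_int U0 w x y z t.
Proof.
  unfold duhamel_int.
  rewrite <- (RInt_sin_conv_opp (fun u => sin (x + y + z - u))).
  - apply RInt_ext; intros tau _.
    replace (x + (y + PI) + z - U0 * (t - tau)) with
      ((x + y + z - U0 * (t - tau)) + PI) by ring.
    rewrite neg_sin; symmetry; apply Ropp_mult_distr_l.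
  - intro u; auto_derive; auto.
Qed.

Lemma vx'_shift_PI (U0 w x y z t : R) :
  vx' U0 w x (y + PI) z t = - vx' U0 w x y z t.
Proof. unfold vx'; rewrite duhamel_int_shift_PI; ring. Qed.

Definition cos_sin_conv (U0 w t : R) : R :=
  RInt (fun tau => cos (U0 * (t - tau)) * sin (w * tau)) 0 t.

Lemma duhamel_int_PI2 (U0 w t : R) :
  duhamel_int U0 w (PI / 2) 0 0 t = cos_sin_conv U0 w t.
Proof.
  apply RInt_ext; intros tau _.
  replace (PI / 2 + 0 + 0 - U0 * (t - tau)) with (PI / 2 - U0 * (t - tau)) by ring.
  now rewrite sin_shift.
Qed.

Lemma cos_sin_conv_opp (U0 w t : R) :
  cos_sin_conv U0 (- w) t = - cos_sin_conv U0 w t.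
Proof.
  unfold cos_sin_conv.
  rewrite <- RInt_sin_conv_opp by (intro; auto_derive; auto).
  apply RInt_ext; intros tau _.
  replace (- w * tau) with (- (w * tau)) by ring.
  rewrite sin_neg; symmetry; apply Ropp_mult_distr_r.
Qed.

Lemma cos_sin_conv_gt0 (U0 w t : R) :
  0 < w -> 0 < t -> Rabs U0 * t < PI / 2 -> w * t < PI ->
  0 < cos_sin_conv U0 w t.
Proof.
  intros hw ht hU hwt.
  apply RInt_gt_0; [lra | | intros; apply continuous_sin_conv; intro; auto_derive; auto].
  intros tau [h0 ht'].
  assert (hcos : Rabs (U0 * (t - tau)) < PI / 2).
  { rewrite Rabs_mult, (Rabs_pos_eq (t - tau)) by lra.
    pose proof (Rabs_pos U0); nra. }
  apply Rabs_def2 in hcos.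
  apply Rmult_lt_0_compat; [apply cos_gt_0 | apply sin_gt_0]; nra.
Qed.

Lemma cos_sin_conv_neq0 (U0 w t : R) :
  w <> 0 -> 0 < t -> Rabs U0 * t < PI / 2 -> Rabs w * t < PI ->
  cos_sin_conv U0 w t <> 0.
Proof.
  intros hw ht hU hwt.
  destruct (Rle_or_lt 0 w) as [hpos | hneg].
  - rewrite Rabs_pos_eq in hwt by lra.
    pose proof (cos_sin_conv_gt0 U0 w t ltac:(lra) ht hU hwt); lra.
  - rewrite Rabs_left in hwt by lra.
    pose proof (cos_sin_conv_gt0 U0 (- w) t ltac:(lra) ht hU hwt).
    rewrite cos_sin_conv_opp in *; lra.
Qed.

Lemma exists_small_time (U0 w : R) :
  w <> 0 -> exists t, 0 < t /\ Rabs U0 * t < PI / 2 /\ Rabs w * t < PI.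
Proof.
  intro hw.
  assert (hpos : 0 < Rabs w) by now apply Rabs_pos_lt.
  pose proof (Rabs_pos U0) as hU; pose proof PI2_1.
  exists (/ (Rabs U0 + Rabs w)).
  assert (ht : 0 < / (Rabs U0 + Rabs w)) by (apply Rinv_0_lt_compat; lra).
  assert (hsum : (Rabs U0 + Rabs w) * / (Rabs U0 + Rabs w) = 1) by (field; lra).
  repeat split; nra.
Qed.

Theorem proposition8 (U0 omega_f : R) (hU0 : 0 < U0) (homega : omega_f <> 0) :
  ~ exists Phi : R -> R -> R -> R -> R,
      forall x y z t : R,
        is_derive (fun a => Phi a y z t) x (vx' U0 omega_f x y z t) /\
        is_derive (fun b => Phi x b z t) y (vy' U0 omega_f x y z t) /\
        is_derive (fun c => Phi x y c t) z (vz' U0 omega_f x y z t).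
Proof.
  intros [Phi HPhi].
  assert (vx'_indep : forall x y y' z t,
             vx' U0 omega_f x y z t = vx' U0 omega_f x y' z t).
  { intros x y y' z t.
    apply (partial_derive_indep (fun a b => Phi a b z t)
             (fun a b => vx' U0 omega_f a b z t)); intros a b; apply HPhi. }
  assert (vx'_0 : forall x y z t, vx' U0 omega_f x y z t = 0).
  { intros x y z t.
    pose proof (vx'_shift_PI U0 omega_f x y z t).
    rewrite (vx'_indep x (y + PI) y) in *; lra. }
  destruct (exists_small_time U0 omega_f homega) as [t [ht [hU hw]]].
  apply (cos_sin_conv_neq0 U0 omega_f t homega ht hU hw).
  rewrite <- duhamel_int_PI2.
  specialize (vx'_0 (PI / 2) 0 0 t).
  unfold vx', heaviside in vx'_0.
  destruct (Rle_dec 0 t); lra.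
Qed.
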